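(* Let $k \geqslant 2$, and let $\pi_1, \ldots, \pi_k \geqslant 3$ be pairwise relatively prime integers, where $\pi_1=3$. Then the minimal DFA that recognizes the same language as the NFA $A_{\pi_1, \ldots, \pi_k}$ has at least $\prod_{i=1}^k (2^{\pi_i}-2)$ states.
   Context: The NFA $A_{\pi_1,\ldots,\pi_k}=(\{a,b\},Q,\{\widehat q\},\delta,\{\widehat q\})$ has states $Q=\{\widehat{q}\} \cup \bigcup_{i=1}^k \{q_{i,0}, \ldots, q_{i,\pi_i-1}\} \cup \bigcup_{i=1}^k \{r_{i,1}, \ldots, r_{i,\pi_i-2}\}$, unique initial state $\widehat q$, unique accepting state $\widehat q$, and exactly the following transitions: $\delta(\widehat{q}, a) = \{q_{1,0}, \ldots, q_{k,0}\}$; $\delta(q_{i,j},a) = \{q_{i,(j+1) \bmod \pi_i}\}$ for all $i$ and $0\leqslant j\leqslant \pi_i-1$; $\delta(q_{i,j},b) = \{r_{i,j}\}$ and $\delta(r_{i,j},a)=\{q_{i,j+1}\}$ for $1 \leqslant j \leqslant \pi_i-2$; $\delta(q_{i,0},b) = \{\widehat{q}\}$; all other transitions are empty. The language of an NFA is the set of strings on which some computation from an initial state ends in an accepting state. *)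

From mathcomp Require Import all_boot.
Set Implicit Arguments. Unset Strict Implicit. Unset Printing Implicit Defensive.

Inductive sym := sa | sb.

(* States of the NFA A_{pi_1,...,pi_k}:
   Qhat = \widehat q, Qs i j = q_{i,j}, Rs i j = r_{i,j}. Indices i range over
   1..k as in the paper; out-of-range states are unreachable. *)
Inductive nstate := Qhat | Qs (i j : nat) | Rs (i j : nat).

Inductive step (k : nat) (pi : nat -> nat) : nstate -> sym -> nstate -> Prop :=
| st_hat : forall i, 1 <= i <= k -> step k pi Qhat sa (Qs i 0)
| st_cyc : forall i j, 1 <= i <= k -> j < pi i ->
    step k pi (Qs i j) sa (Qs i ((j + 1) %% pi i))
| st_qb : forall i j, 1 <= i <= k -> 1 <= j <= pi i - 2 ->
    step k pi (Qs i j) sb (Rs i j)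
| st_ra : forall i j, 1 <= i <= k -> 1 <= j <= pi i - 2 ->
    step k pi (Rs i j) sa (Qs i j.+1)
| st_back : forall i, 1 <= i <= k -> step k pi (Qs i 0) sb Qhat.

Inductive reach (k : nat) (pi : nat -> nat) : nstate -> seq sym -> nstate -> Prop :=
| reach_nil : forall s, reach k pi s [::] s
| reach_cons : forall s x t w u, step k pi s x t -> reach k pi t w u ->
    reach k pi s (x :: w) u.

Definition nfa_accepts (k : nat) (pi : nat -> nat) (w : seq sym) : Prop :=
  reach k pi Qhat w Qhat.

Definition dfa_recognizes (S : finType) (s0 : S) (d : S -> sym -> S) (F : pred S)
  (L : seq sym -> Prop) : Prop :=
  forall w : seq sym, F (foldl d s0 w) <-> L w.

From mathcomp Require Import all_boot zify.
From Stdlib Require Import ClassicalEpsilon.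
Set Implicit Arguments. Unset Strict Implicit. Unset Printing Implicit Defensive.

(* After reading a word from Qhat, the subset automaton occupies a set of states
   q_{i,j}, i.e. one subset X_i of each cycle Z/pi_i.  Every choice of nonempty
   proper subsets X_i occurs.  By the Chinese remainder theorem a single power
   of a rotates all cycles so that each has an occupied state at 0 followed by
   an empty one at 1; such a configuration is obtained by reading ba from a
   configuration of smaller total size, and the base case {q_{i,0}} is reached
   by a.  Two distinct such configurations are separated by a word a^m b, with
   m again given by the Chinese remainder theorem, so any DFA for the language
   needs prod_i (2^pi_i - 2) states. *)

Lemma card_le_of_injective_rel (A B : finType) (D : {pred A}) (R : A -> B -> Prop) :
  (forall a, a \in D -> exists b, R a b) ->
  (forall a a' b, a \in D -> a' \in D -> R a b -> R a' b -> a = a') ->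
  #|D| <= #|B|.
Proof.
move=> total inj; have [-> //|/card_gt0P [a0 Da0]] := posnP #|D|.
have [b0 _] := total a0 Da0.
pose h a := epsilon (inhabits b0) (R a).
have Rh a : a \in D -> R a (h a) by move=> /total /(epsilon_spec (inhabits b0)).
rewrite -(@card_in_imset _ _ h); first exact: max_card.
by move=> a a' Da Da' eq_h; apply: (inj _ _ _ Da Da' (Rh a Da)); rewrite eq_h; exact: Rh.
Qed.

Lemma chinese_family n (p : nat -> nat) (P : nat -> nat -> Prop) :
  (forall i j, 1 <= i <= n -> 1 <= j <= n -> i != j -> coprime (p i) (p j)) ->
  (forall i, 1 <= i <= n -> exists r, P i r) ->
  exists x, forall i, 1 <= i <= n -> exists2 r, P i r & x = r %[mod p i].
Proof.
move=> p_coprime P_ex.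
suff /(_ n (leqnn n)) [x [M [sol _]]] : forall m, m <= n -> exists x M,
    [/\ forall i, 1 <= i <= m -> exists2 r, P i r & x = r %[mod p i],
        forall i, 1 <= i <= m -> p i %| M
      & forall j, m < j <= n -> coprime M (p j)].
  by exists x.
elim=> [_|m IH lt_mn]; first by exists 0, 1; split=> [i|i|j _]; rewrite ?coprime1n //; lia.
have [x [M [sol dvdM coM]]] := IH (ltnW lt_mn).
have [r Pr] := P_ex m.+1 (ltac:(lia)).
have coMm := coM m.+1 (ltac:(lia)).
exists (chinese M (p m.+1) x r), (M * p m.+1); split=> [i|i|j] rng_i.
- have [le_im|->] : i <= m \/ i = m.+1 by lia.
    have [r' Pr' xr'] := sol i (ltac:(lia)).
    exists r' => //; have dvd_iM := dvdM i (ltac:(lia)).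
    by rewrite -(modn_dvdm _ dvd_iM) chinese_modl // (modn_dvdm _ dvd_iM).
  by exists r => //; rewrite chinese_modr.
- have [le_im|->] : i <= m \/ i = m.+1 by lia.
    by rewrite dvdn_mulr // dvdM //; lia.
  exact: dvdn_mull.
by rewrite coprimeMl coM ?p_coprime //; lia.
Qed.

Lemma count_lt_size (T : Type) (a : pred T) s : (count a s < size s) = ~~ all a s.
Proof. by rewrite all_count ltn_neqAle count_size andbT. Qed.

Lemma addn_modn_inj p m j j' : j < p -> j' < p ->
  (j + m) %% p = (j' + m) %% p -> j = j'.
Proof.
move=> lt_jp lt_j'p /eqP; rewrite eqn_modDr => /eqP.
by rewrite !modn_small.
Qed.

Lemma perm_iota_shift p s : perm_eq [seq (j + s) %% p | j <- iota 0 p] (iota 0 p).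
Proof.
have [->|p_gt0] := posnP p; first by [].
have uniq_shift : uniq [seq (j + s) %% p | j <- iota 0 p].
  rewrite map_inj_in_uniq ?iota_uniq // => j j'; rewrite !mem_iota !add0n.
  exact: addn_modn_inj.
have sub_shift : {subset [seq (j + s) %% p | j <- iota 0 p] <= iota 0 p}.
  by move=> _ /mapP [j _ ->]; rewrite mem_iota add0n ltn_pmod.
apply: uniq_perm; rewrite ?iota_uniq //.
by apply: (uniq_min_size uniq_shift sub_shift _).2; rewrite size_map.
Qed.

Lemma count_iota_shift p s (a : pred nat) :
  count (fun j => a ((j + s) %% p)) (iota 0 p) = count a (iota 0 p).
Proof. by rewrite -(count_map (fun j => (j + s) %% p)); apply/permP/perm_iota_shift. Qed.

Lemma exists_iota_shift p s j : j < p -> exists2 j', j' < p & (j' + s) %% p = j.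
Proof.
move=> lt_jp; have : j \in iota 0 p by rewrite mem_iota.
rewrite -(perm_mem (perm_iota_shift p s)) => /mapP [j'].
by rewrite mem_iota => lt_j'p ->; exists j'.
Qed.

Lemma exists_boundary p (a : pred nat) : 0 < count a (iota 0 p) < p ->
  exists2 c, c < p & a c && ~~ a ((c + 1) %% p).
Proof.
case/andP; rewrite -has_count => /hasP [j0]; rewrite mem_iota add0n => lt_j0p a_j0.
rewrite -{2}(size_iota 0 p) count_lt_size.
case/allPn=> j1; rewrite mem_iota add0n => lt_j1p not_a_j1.
have [/hasP [c]|/hasPn closed] := boolP (has (fun c => a c && ~~ a ((c + 1) %% p)) (iota 0 p)).
  by rewrite mem_iota add0n; exists c.
have a_from_j0 n : a ((j0 + n) %% p).
  elim: n => [|n IHn]; first by rewrite addn0 modn_small.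
  have := closed ((j0 + n) %% p); rewrite mem_iota add0n ltn_pmod ?IHn; last by lia.
  by rewrite negbK modnDml addn1 addnS; apply.
have := a_from_j0 (j1 + p - j0).
by rewrite (_ : j0 + _ = j1 + p) ?modnDr ?modn_small ?(negbTE not_a_j1) //; lia.
Qed.

Lemma count_iota_eq1 p (a : pred nat) j : count a (iota 0 p) = 1 -> a 0 -> j < p ->
  a j = (j == 0).
Proof.
case: p => // p /= count_eq1 a0; rewrite a0 add1n in count_eq1.
case: j => [//|j] lt_jp; apply/negP => a_j.
have : has a (iota 1 p) by apply/hasP; exists j.+1; rewrite // mem_iota; lia.
by rewrite has_count; case: count_eq1 => ->.
Qed.

Lemma count_shift_down p (a : pred nat) (e : bool) : 2 < p ->
  count (fun j => ((1 <= j <= p - 2) && a j.+1) || ((j == 0) && e)) (iota 0 p) + a 0 + a 1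
  = count a (iota 0 p) + e.
Proof.
case: p => [|[|[|n]]] // _; set b := (fun j => _).
have mid : count b (iota 1 n.+1) = count a (iota 2 n.+1).
  rewrite (iotaDl 1 1) count_map; apply: eq_in_count => j; rewrite mem_iota => rng_j.
  rewrite /b /=; have [-> ->] : (0 < j <= n.+3 - 2) = true /\ (j == 0) = false by lia.
  by rewrite orbF add1n.
have lhs : iota 0 n.+3 = [:: 0] ++ iota 1 n.+1 ++ [:: n.+2].
  by rewrite -(iotaD 1 n.+1 1) addn1.
rewrite {1}lhs (iotaD 0 2 n.+1) !count_cat mid /=.
rewrite /b /= (_ : n.+2 <= n.+3 - 2 = false); last by lia.
rewrite !add0n; clear mid b; lia.
Qed.

Lemma dfa_residual (S : finType) (s0 : S) (d : S -> sym -> S) (F : pred S)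
    (L : seq sym -> Prop) w1 w2 :
  dfa_recognizes s0 d F L -> foldl d s0 w1 = foldl d s0 w2 ->
  forall v, L (w1 ++ v) -> L (w2 ++ v).
Proof. by move=> rec eq_w v /rec; rewrite foldl_cat eq_w -foldl_cat => /rec. Qed.

Lemma card_proper_nonempty_subsets (T : finType) (B : {set T}) : B != set0 ->
  #|[set Z : {set T} | (Z != set0) && (Z \proper B)]| = 2 ^ #|B| - 2.
Proof.
move=> B_n0; have -> : [set Z | (Z != set0) && (Z \proper B)] = powerset B :\: [set set0; B].
  by apply/setP => Z; rewrite !inE properEneq negb_or andbA.
rewrite cardsD card_powerset (setIidPr _) ?cards2 1?eq_sym ?B_n0 //.
by apply/subsetP => Z; rewrite !inE => /orP [] /eqP ->; rewrite ?sub0set.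
Qed.

Lemma card_ord_lt n p : p <= n -> #|[set j : 'I_n | j < p]| = p.
Proof.
move=> le_pn; have -> : [set j : 'I_n | j < p] = widen_ord le_pn @: 'I_p.
  apply/setP => j; rewrite inE.
  apply/idP/imsetP => [lt_jp|[j' _ ->]]; last exact: (ltn_ord j').
  by exists (Ordinal lt_jp) => //; apply: val_inj.
by rewrite card_imset ?card_ord // => j j' /(congr1 val) /= /val_inj.
Qed.

Section SubsetConstruction.

Variables (k : nat) (pi : nat -> nat).

Local Notation reach := (reach k pi).
Local Notation step := (step k pi).

Lemma reach_cons s x w u : reach s (x :: w) u <-> exists t, step s x t /\ reach t w u.
Proof.
split=> [r|[t [st r]]]; last exact: reach_cons st r.
by inversion r as [|? ? t ? ? st r']; exists t.
Qed.

Lemma reach_cat s w1 w2 u :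
  reach s (w1 ++ w2) u <-> exists t, reach s w1 t /\ reach t w2 u.
Proof.
elim: w1 s => [|x w1 IH] s /=.
  split=> [r|[t [r0 r]]]; first by exists s; split=> //; constructor.
  by inversion r0.
rewrite reach_cons; split=> [[t [st /IH [t' [r1 r2]]]]|[t' [/reach_cons [t [st r1]] r2]]].
  by exists t'; split=> //; apply/reach_cons; exists t.
by exists t; split=> //; apply/IH; exists t'.
Qed.

Lemma reach_seq1 s x u : reach s [:: x] u <-> step s x u.
Proof.
rewrite reach_cons; split=> [[t [st r]]|st]; last by exists u; split=> //; constructor.
by inversion r; subst.
Qed.

Lemma step_Qs_a i j t : 1 <= i <= k -> j < pi i ->
  step (Qs i j) sa t <-> t = Qs i ((j + 1) %% pi i).
Proof. by move=> rng_i lt_j; split=> [st|->]; [inversion st | constructor]. Qed.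

Lemma reach_Qs_nseq_a i j m t : 1 <= i <= k -> j < pi i ->
  reach (Qs i j) (nseq m sa) t <-> t = Qs i ((j + m) %% pi i).
Proof.
move=> rng_i; elim: m j => [|m IHm] j lt_j /=.
  rewrite addn0 modn_small //; split=> [r|->]; [by inversion r | constructor].
have lt_j1 : (j + 1) %% pi i < pi i by rewrite ltn_pmod //; lia.
have -> : (j + m.+1) %% pi i = ((j + 1) %% pi i + m) %% pi i.
  by rewrite modnDml; congr (_ %% _); lia.
rewrite reach_cons -(IHm _ lt_j1); split=> [[t' [/(step_Qs_a _ rng_i lt_j) -> //]]|r].
by exists (Qs i ((j + 1) %% pi i)); rewrite step_Qs_a.
Qed.

Lemma step_Qs_b_Qhat i j : 1 <= i <= k -> step (Qs i j) sb Qhat <-> j = 0.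
Proof. by move=> rng_i; split=> [st|->]; [inversion st | constructor]. Qed.

Lemma reach_Qs_ba i j t : 1 <= i <= k ->
  reach (Qs i j) [:: sb; sa] t <->
  (1 <= j <= pi i - 2 /\ t = Qs i j.+1) \/ (j = 0 /\ exists2 i', 1 <= i' <= k & t = Qs i' 0).
Proof.
move=> rng_i; rewrite reach_cons; split.
  case=> t1 [st1 /reach_seq1 st2]; inversion st1; subst.
    by inversion st2; subst; left.
  by inversion st2 as [i' rng_i'| | | |]; right; split=> //; exists i'.
case=> [[rng_j ->]|[-> [i' rng_i' ->]]].
  by exists (Rs i j); split; [constructor | apply/reach_seq1; constructor].
by exists Qhat; split; [constructor | apply/reach_seq1; constructor].
Qed.

Definition in_config (X : nat -> nat -> bool) (t : nstate) : bool :=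
  if t is Qs i j then [&& 1 <= i <= k, j < pi i & X i j] else false.

Definition reaches (w : seq sym) (X : nat -> nat -> bool) : Prop :=
  forall t, reach Qhat w t <-> in_config X t.

Lemma reaches_eq w X Y : reaches w X ->
  (forall i j, 1 <= i <= k -> j < pi i -> X i j = Y i j) -> reaches w Y.
Proof.
move=> rX eqXY t; rewrite rX; case: t => //= i j.
by split=> /and3P [rng_i lt_j]; rewrite eqXY // => ?; apply/and3P.
Qed.

Lemma reach_after_config w X v t : reaches w X ->
  reach Qhat (w ++ v) t <->
  exists i j, [/\ 1 <= i <= k, j < pi i, X i j & reach (Qs i j) v t].
Proof.
move=> rX; rewrite reach_cat; split=> [[t' [/rX]]|].
  by case: t' => //= i j /and3P [? ? ?] r; exists i, j.
by case=> i [j [rng_i lt_j Xij r]]; exists (Qs i j); rewrite rX /= rng_i lt_j Xij.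
Qed.

Lemma reach_after_config_nseq_a w X m t : reaches w X ->
  reach Qhat (w ++ nseq m sa) t <->
  exists i j, [/\ 1 <= i <= k, j < pi i, X i j & t = Qs i ((j + m) %% pi i)].
Proof.
move=> /reach_after_config ->.
by split=> [] [i [j [rng_i lt_j Xij r]]]; exists i, j; split=> //;
  apply/(reach_Qs_nseq_a _ _ rng_i lt_j).
Qed.

Lemma reaches_nseq_a w X s :
  reaches w (fun i j => X i ((j + s) %% pi i)) -> reaches (w ++ nseq s sa) X.
Proof.
move=> rX t; rewrite (reach_after_config_nseq_a _ _ rX); split.
  by case=> i [j [rng_i lt_j Xij ->]]; rewrite /= rng_i ltn_pmod //; lia.
case: t => //= i j /and3P [rng_i lt_j Xij].
have [j' lt_j' eq_j] := exists_iota_shift s lt_j.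
by exists i, j'; rewrite eq_j.
Qed.

Lemma accepts_nseq_a_b w X m : reaches w X ->
  nfa_accepts k pi (w ++ nseq m sa ++ [:: sb]) <->
  exists i j, [/\ 1 <= i <= k, j < pi i, X i j & (j + m) %% pi i = 0].
Proof.
move=> rX; rewrite /nfa_accepts catA reach_cat; split.
  case=> _ [/(reach_after_config_nseq_a _ _ rX) [i [j [rng_i lt_j Xij ->]]]].
  by move/reach_seq1/step_Qs_b_Qhat => /(_ rng_i) ?; exists i, j.
case=> i [j [rng_i lt_j Xij eq0]]; exists (Qs i 0); split.
  by apply/(reach_after_config_nseq_a _ _ rX); exists i, j; rewrite eq0.
by apply/reach_seq1/step_Qs_b_Qhat.
Qed.

Definition after_ba (X : nat -> nat -> bool) i j :=
  ((2 <= j) && X i j.-1) || ((j == 0) && has (X^~ 0) (iota 1 k)).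

Hypothesis pi_gt0 : forall i, 1 <= i <= k -> 0 < pi i.

Lemma reaches_a : reaches [:: sa] (fun _ j => j == 0).
Proof.
move=> t; rewrite reach_seq1; split=> [st|].
  by inversion st as [i rng_i| | | |]; rewrite /= rng_i pi_gt0.
by case: t => //= i j /and3P [rng_i _ /eqP ->]; constructor.
Qed.

Lemma reaches_ba w X : reaches w X -> reaches (w ++ [:: sb; sa]) (after_ba X).
Proof.
move=> rX t; rewrite (reach_after_config _ _ rX); split.
  case=> i [j [rng_i lt_j Xij /reach_Qs_ba]] /(_ rng_i).
  case=> [[rng_j ->]|[j_eq0 [i' rng_i' ->]]] /=; rewrite /after_ba.
    by rewrite rng_i Xij /=; apply/and3P; split=> //; lia.
  rewrite rng_i' pi_gt0 //=; apply/hasP; exists i; first by rewrite mem_iota; lia.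
  by rewrite -j_eq0.
case: t => //= i j /and3P [rng_i lt_j]; rewrite /after_ba.
case/orP=> [/andP [le2j Xij]|/andP [/eqP -> /hasP [i' + Xi'0]]].
  exists i, j.-1; split=> //; first lia.
  by apply/reach_Qs_ba => //; left; split; [lia | congr Qs; lia].
rewrite mem_iota => rng_i'; exists i', 0; split=> //; first exact: pi_gt0.
by apply/reach_Qs_ba => //; right; split=> //; exists i.
Qed.

End SubsetConstruction.

Section ReachableConfigurations.

Variables (k : nat) (pi : nat -> nat).
Hypothesis k_ge2 : 2 <= k.
Hypothesis pi_ge3 : forall i, 1 <= i <= k -> 3 <= pi i.
Hypothesis pi_coprime :
  forall i j, 1 <= i <= k -> 1 <= j <= k -> i != j -> coprime (pi i) (pi j).

Local Notation reaches := (reaches k pi).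

Let pi_gt0 i : 1 <= i <= k -> 0 < pi i.
Proof. by move/pi_ge3; lia. Qed.

Definition occupancy (X : nat -> nat -> bool) i := count (X i) (iota 0 (pi i)).

Definition proper_config X := forall i, 1 <= i <= k -> 0 < occupancy X i < pi i.

Definition total_occupancy X := \sum_(i <- iota 1 k) occupancy X i.

Lemma ba_predecessor R : proper_config R ->
  (forall i, 1 <= i <= k -> R i 0 && ~~ R i 1) ->
  ~~ all (fun i => occupancy R i == 1) (iota 1 k) ->
  exists X, [/\ proper_config X, total_occupancy X < total_occupancy R &
    forall i j, 1 <= i <= k -> j < pi i -> after_ba k X i j = R i j].
Proof.
move=> pR R01 not_all1.
(* X shifts R down on [1, pi_i - 2] and holds q_{i,0} exactly when e i; reading
   ba refills position 0 everywhere through Qhat, so e must cover the singleton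
   components, be nonempty, and miss some component for the size to drop. *)
pose single i := occupancy R i == 1.
pose e i := single i || ((i == 1) && ~~ has single (iota 1 k)).
pose X i j := ((1 <= j <= pi i - 2) && R i j.+1) || ((j == 0) && e i).
have occX i : 1 <= i <= k -> occupancy X i + 1 = occupancy R i + e i.
  move=> rng_i; have := count_shift_down (R i) (e i) (pi_ge3 rng_i).
  by case/andP: (R01 i rng_i) => -> /negbTE ->; rewrite addn0.
have has_e : has e (iota 1 k).
  have [/hasP [i rng_i single_i]|no_single] := boolP (has single (iota 1 k)).
    by apply/hasP; exists i; rewrite // /e single_i.
  by apply/hasP; exists 1; rewrite ?mem_iota /e ?no_single ?orbT //; lia.
have not_all_e : ~~ all e (iota 1 k).
  have [has_single|no_single] := boolP (has single (iota 1 k)).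
    by rewrite (eq_all (a2 := single)) // => i; rewrite /e has_single andbF orbF.
  apply/allPn; exists 2; first by rewrite mem_iota; lia.
  by rewrite /e negb_or; apply/andP; split; [apply: (hasPn no_single); rewrite mem_iota; lia|].
exists X; split.
- move=> i rng_i; have := occX i rng_i; have := pR i rng_i; rewrite /e.
  by rewrite /single; case: eqP => [eq1|ne1]; case: ((i == 1) && _) => /=; lia.
- have sum_occ : \sum_(i <- iota 1 k) (occupancy X i + 1)
                 = \sum_(i <- iota 1 k) (occupancy R i + e i).
    by apply: eq_big_seq => i; rewrite mem_iota => rng_i; apply: occX; lia.
  have count_e : \sum_(i <- iota 1 k) (e i : nat) = count e (iota 1 k).
    by rewrite -sum1_count [RHS]big_mkcond.
  move: sum_occ not_all_e; rewrite !big_split /= sum1_size count_e all_count size_iota.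
  have := count_size e (iota 1 k); rewrite size_iota /total_occupancy; lia.
move=> i j rng_i lt_j; rewrite /after_ba /X.
case: j lt_j => [|[|j]] lt_j /=.
- by case/andP: (R01 i rng_i) => -> _; rewrite (eq_has (a2 := e)).
- by case/andP: (R01 i rng_i) => _ /negbTE ->.
- by rewrite orbF (_ : j < pi i - 2) //; lia.
Qed.

Lemma reaches_proper_config X : proper_config X -> exists w, reaches w X.
Proof.
have [n] := ubnP (total_occupancy X); elim: n X => // n IH X /ltnSE le_Xn pX.
(* A boundary of each component is moved to positions 0, 1 simultaneously. *)
have [s aligned] : exists s, forall i, 1 <= i <= k ->
    X i (s %% pi i) && ~~ X i ((s + 1) %% pi i).
  have [|s sol] := @chinese_family k pi
    (fun i c => c < pi i /\ X i c && ~~ X i ((c + 1) %% pi i)) pi_coprime.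
    by move=> i /pX /exists_boundary [c]; exists c.
  exists s => i /sol [c [lt_c bnd] eq_s].
  by rewrite -modnDml !eq_s (modn_small lt_c).
pose R i j := X i ((j + s) %% pi i).
have occR i : occupancy R i = occupancy X i by exact: count_iota_shift.
have pR : proper_config R by move=> i; rewrite occR; exact: pX.
have R01 i : 1 <= i <= k -> R i 0 && ~~ R i 1 by rewrite /R add0n addnC; exact: aligned.
suff [w rR] : exists w, reaches w R by exists (w ++ nseq s sa); exact: reaches_nseq_a.
have [all1|not_all1] := boolP (all (fun i => occupancy R i == 1) (iota 1 k)).
  exists [:: sa]; apply: reaches_eq (reaches_a pi_gt0) _ => i j rng_i lt_j.
  have /eqP occ1 : occupancy R i == 1 by apply: (allP all1); rewrite mem_iota; lia.
  by case/andP: (R01 i rng_i) => R0 _; rewrite (count_iota_eq1 occ1 R0 lt_j).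
have [X' [pX' lt_X'R eq_R]] := ba_predecessor pR R01 not_all1.
have eq_total : total_occupancy R = total_occupancy X by apply: eq_bigr => i _.
have [|w' rX'] := IH X' _ pX'; first by rewrite (leq_trans lt_X'R) // eq_total.
by exists (w' ++ [:: sb; sa]); exact: reaches_eq (reaches_ba pi_gt0 rX') eq_R.
Qed.

Lemma config_sub_of_residual w1 w2 X Y : proper_config Y ->
  reaches w1 X -> reaches w2 Y ->
  (forall m, nfa_accepts k pi (w1 ++ nseq m sa ++ [:: sb]) ->
             nfa_accepts k pi (w2 ++ nseq m sa ++ [:: sb])) ->
  forall i j, 1 <= i <= k -> j < pi i -> X i j -> Y i j.
Proof.
move=> pY rX rY residual i0 j0 rng_i0 lt_j0 Xij0; apply/negPn/negP => not_Yij0.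
(* a^m b accepts from a configuration iff it holds some q_{i,j} with
   j + m = 0 mod pi_i; choose m so that this j is a hole of Y in every
   component, and is j0 in component i0. *)
pose hole i q := [&& q < pi i, ~~ Y i q & (i == i0) ==> (q == j0)].
have [|m sol] := @chinese_family k pi
    (fun i r => exists2 q, hole i q & (q + r) %% pi i = 0) pi_coprime.
  move=> i rng_i; suff [q hole_q] : exists q, hole i q.
    exists (pi i - q), q => //; rewrite subnKC ?modnn //.
    by case/and3P: hole_q => /ltnW.
  have [->|ne_i] := eqVneq i i0; first by exists j0; rewrite /hole lt_j0 not_Yij0 !eqxx.
  have : ~~ all (Y i) (iota 0 (pi i)).
    by rewrite -count_lt_size size_iota; case/andP: (pY i rng_i).
  case/allPn=> q; rewrite mem_iota add0n => /andP [_ lt_q] not_Yq.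
  by exists q; rewrite /hole lt_q not_Yq (negbTE ne_i).
have hole_unique i q j : hole i q -> (q + m) %% pi i = 0 ->
    j < pi i -> (j + m) %% pi i = 0 -> j = q.
  move=> /and3P [lt_q _ _] qm0 lt_j jm0; apply: (addn_modn_inj (m := m) lt_j lt_q).
  by rewrite jm0 qm0.
have hole_mod i : 1 <= i <= k -> exists2 q, hole i q & (q + m) %% pi i = 0.
  by move=> /sol [r [q hole_q qr0] eq_m]; exists q; rewrite // -modnDmr eq_m modnDmr.
have [q hole_q q0] := hole_mod i0 rng_i0.
have eq_q : q = j0 by case/and3P: hole_q => _ _; rewrite eqxx => /eqP.
have /(accepts_nseq_a_b m rY) [i [j [rng_i lt_j Yij jm0]]] :
    nfa_accepts k pi (w2 ++ nseq m sa ++ [:: sb]).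
  by apply/residual/(accepts_nseq_a_b m rX); exists i0, j0; split; rewrite // -eq_q.
have [q' hole_q' q'0] := hole_mod i rng_i.
have eq_j := hole_unique i q' j hole_q' q'0 lt_j jm0.
by case/and3P: hole_q' => _; rewrite -eq_j Yij.
Qed.

End ReachableConfigurations.

Section ConfigurationFamilies.

Variables (k : nat) (pi : nat -> nat).

(* Component i' : 'I_k encodes the cycle i'.+1 of the automaton, as a subset
   of the common index type 'I_M. *)
Definition config_bound := \max_(i < k.+1) pi i.
Local Notation M := config_bound.

Lemma leq_config_bound i : i <= k -> pi i <= M.
Proof.
by move=> le_ik; exact: (@leq_bigmax _ (fun i : 'I_k.+1 => pi i) (Ordinal (le_ik : i < k.+1))).
Qed.

Definition component (i : 'I_k) : {set 'I_M} := [set j : 'I_M | j < pi i.+1].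

Definition proper_family :=
  family (fun i => mem [set Z | (Z != set0) && (Z \proper component i)]).

Definition config_of (f : {ffun 'I_k -> {set 'I_M}}) i j :=
  [exists i' : 'I_k, (i'.+1 == i) && [exists j' : 'I_M, (j' == j :> nat) && (j' \in f i')]].

Lemma config_of_ord f (i : 'I_k) (j : 'I_M) : config_of f i.+1 j = (j \in f i).
Proof.
apply/existsP/idP => [[i' /andP [/eqP [/val_inj <-]]]|fij].
  by case/existsP=> j' /andP [/eqP /val_inj <-].
by exists i; rewrite eqxx; apply/existsP; exists j; rewrite eqxx.
Qed.

Lemma card_proper_family : (forall i, 1 <= i <= k -> 0 < pi i) ->
  #|proper_family| = \prod_(1 <= i < k.+1) (2 ^ pi i - 2).
Proof.
move=> pi_gt0; rewrite card_family foldrE big_image /= big_add1 /= big_mkord.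
apply: eq_bigr => i _.
have card_comp : #|component i| = pi i.+1 by apply/card_ord_lt/leq_config_bound.
have comp_n0 : component i != set0.
  by rewrite -card_gt0 card_comp pi_gt0 // ltn_ord.
by rewrite -card_comp -card_proper_nonempty_subsets //; apply: eq_card => Z; rewrite !inE.
Qed.

Lemma proper_config_of f : f \in proper_family -> proper_config k pi (config_of f).
Proof.
move=> /familyP Ff i rng_i; have [{rng_i}i ->] : exists i' : 'I_k, i = i'.+1.
  have lt_i : i.-1 < k by lia.
  by exists (Ordinal lt_i) => /=; lia.
have := Ff i; rewrite inE => /andP [/set0Pn [j fj] /properP [sub_comp [j' comp_j' not_fj']]].
have lt_comp (x : 'I_M) : x \in component i -> x < pi i.+1 by rewrite inE.
apply/andP; split; rewrite /occupancy.
  rewrite -has_count; apply/hasP; exists (val j); last by rewrite config_of_ord.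
  by rewrite mem_iota /= lt_comp //; exact: (subsetP sub_comp).
rewrite -[X in _ < X](size_iota 0) count_lt_size; apply/allPn; exists (val j').
  by rewrite mem_iota /= lt_comp.
by rewrite config_of_ord.
Qed.

Lemma config_of_inj f g : f \in proper_family -> g \in proper_family ->
  (forall i j, 1 <= i <= k -> j < pi i -> config_of f i j = config_of g i j) -> f = g.
Proof.
move=> Ff Fg eq_fg; apply/ffunP => i; apply/setP => j.
have [lt_j|ge_j] := ltnP j (pi i.+1).
  by rewrite -!config_of_ord eq_fg //= ltn_ord.
have out h : h \in proper_family -> j \notin h i.
  move=> /familyP /(_ i); rewrite inE => /andP [_ /proper_sub /subsetP sub_comp].
  by apply/negP => /sub_comp; rewrite inE ltnNge ge_j.
by rewrite (negbTE (out f Ff)) (negbTE (out g Fg)).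
Qed.

End ConfigurationFamilies.

Theorem lemma6 (k : nat) (pi : nat -> nat) :
  2 <= k ->
  (forall i, 1 <= i <= k -> 3 <= pi i) ->
  (forall i j, 1 <= i <= k -> 1 <= j <= k -> i != j -> coprime (pi i) (pi j)) ->
  pi 1 = 3 ->
  forall (S : finType) (s0 : S) (d : S -> sym -> S) (F : pred S),
    dfa_recognizes s0 d F (nfa_accepts k pi) ->
    \prod_(1 <= i < k.+1) (2 ^ pi i - 2) <= #|S|.
Proof.
move=> k_ge2 pi_ge3 pi_coprime _ S s0 d F rec.
have pi_gt0 i : 1 <= i <= k -> 0 < pi i by move/pi_ge3; lia.
rewrite -(card_proper_family pi_gt0).
apply: (@card_le_of_injective_rel _ _ _
  (fun f q => exists w, reaches k pi w (config_of f) /\ foldl d s0 w = q)).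
  move=> f /proper_config_of /(reaches_proper_config k_ge2 pi_ge3 pi_coprime) [w rw].
  by exists (foldl d s0 w), w.
move=> f g _ Ff Fg [w1 [r1 <-]] [w2 [r2 eq_w]].
have sub12 := config_sub_of_residual pi_coprime (proper_config_of Fg) r1 r2.
have sub21 := config_sub_of_residual pi_coprime (proper_config_of Ff) r2 r1.
apply: config_of_inj Ff Fg _ => i j rng_i lt_j; apply/idP/idP.
  by apply: sub12 => // m; apply: dfa_residual rec (esym eq_w) _.
by apply: sub21 => // m; apply: dfa_residual rec eq_w _.
Qed.
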